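(* Let $u,v$ be monomials with $\mu(u)\cap\mu(v)=\emptyset$ and $p_{ij}p_{ji}=1$ for all $x_i\in\mu(u)$, $x_j\in\mu(v)$. Then the following are equivalent: (i) $u\neq0$ and $v\neq0$ in $\mathfrak{B}(V)$; (ii) $uv\neq0$; (iii) $uv\notin\mathfrak{L}(V)$.
   Context: $V$ is a braided vector space of diagonal type over an algebraically closed field $F$ of characteristic $0$ with basis $x_1,\dots,x_n$, braiding $C(x_i\otimes x_j)=q_{ij}x_j\otimes x_i$, Nichols algebra $\mathfrak{B}(V)$ ($\mathbb{Z}^n$-graded, $\deg x_i=e_i$); $\chi(e_i,e_j)=q_{ij}$, $p_{ij}:=q_{ij}$, $p_{uv}:=\chi(\deg u,\deg v)$. For homogeneous $x,y$, $[x,y]:=yx-p_{yx}xy$; $\mathfrak{L}(V)$ is the linear span of all iterated brackets (any bracketing) of $x_1,\dots,x_n$. A monomial is a nonempty word in $x_1,\dots,x_n$ viewed in $\mathfrak{B}(V)$, and $\mu(u)$ is its set of letters. *)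

(* Nichols algebra of diagonal type, modelled concretely:
   T(V) elements are finite formal sums (lists of (coefficient, word)),
   and B(V) = T(V)/ker(Omega), Omega the quantum symmetrizer. *)
From HB Require Import structures.
From mathcomp Require Import all_boot all_order all_algebra all_fingroup.
Set Implicit Arguments. Unset Strict Implicit. Unset Printing Implicit Defensive.
Import GRing.Theory.
Local Open Scope ring_scope.

Section Nichols.
Variables (F : fieldType) (n : nat) (q : 'I_n -> 'I_n -> F).

Definition word := seq 'I_n.
Definition tens := seq (F * word).

Definition tcoef (t : tens) (w : word) : F := \sum_(p <- t | p.2 == w) p.1.
Definition tzero (t : tens) : Prop := forall w, tcoef t w = 0.

Definition tadd (t1 t2 : tens) : tens := t1 ++ t2.
Definition tscale (c : F) (t : tens) : tens := [seq (c * p.1, p.2) | p <- t].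
Definition tmul (t1 t2 : tens) : tens :=
  [seq (a.1 * b.1, a.2 ++ b.2) | a <- t1, b <- t2].
Definition tword (w : word) : tens := [:: (1, w)].

(* Matsumoto lift T_s of s in S_m acting on x_{w_0} ... x_{w_{m-1}}:
   letter w_a moves to position s a; each inverted pair a<b, s b < s a
   contributes q_{w_a w_b}. *)
Definition perm_coef (w : word) (s : 'S_(size w)) : F :=
  \prod_(a : 'I_(size w)) \prod_(b : 'I_(size w) | (a < b)%N && (s b < s a)%N)
     q (tnth (in_tuple w) a) (tnth (in_tuple w) b).
Definition perm_word (w : word) (s : 'S_(size w)) : word :=
  [seq tnth (in_tuple w) ((s^-1)%g k) | k <- enum 'I_(size w)].

Definition symm_word (w : word) : tens :=
  [seq (perm_coef s, perm_word s) | s <- enum [set: 'S_(size w)]].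
Definition symm (t : tens) : tens :=
  flatten [seq tscale p.1 (symm_word p.2) | p <- t].

Definition nichols_zero (t : tens) : Prop := tzero (symm t).

(* chi(deg s1, deg s2) for the multisets of letters s1, s2 *)
Definition chi (s1 s2 : word) : F := \prod_(a <- s1) \prod_(b <- s2) q a b.

Inductive btree := BLeaf of 'I_n | BNode of btree & btree.
Fixpoint bletters (t : btree) : word :=
  match t with BLeaf i => [:: i] | BNode x y => bletters x ++ bletters y end.
(* [x,y] = y x - p_{yx} x y *)
Fixpoint beval (t : btree) : tens :=
  match t with
  | BLeaf i => tword [:: i]
  | BNode x y => tadd (tmul (beval y) (beval x))
                      (tscale (- chi (bletters y) (bletters x))
                              (tmul (beval x) (beval y)))
  end.

(* the class of t in B(V) lies in L(V) = span of iterated brackets *)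
Definition in_L (t : tens) : Prop :=
  exists cs : seq (F * btree),
    nichols_zero (tadd t (flatten [seq tscale (- c.1) (beval c.2) | c <- cs])).

End Nichols.

From HB Require Import structures.
From mathcomp Require Import all_boot all_order all_algebra all_fingroup.
From mathcomp Require Import zify ring.
Set Implicit Arguments. Unset Strict Implicit. Unset Printing Implicit Defensive.
Import GRing.Theory.
Local Open Scope ring_scope.

(* The coefficient of a word w' in Omega(w) obeys a recursion on the first
   letter of w.  When the letters are split by a predicate P into two classes
   that braid symmetrically with each other (q_xy q_yx = 1 across the classes),
   this recursion shows that, up to invertible shuffle weights, the coefficient
   is the product of the coefficients of the P-parts and of the non-P-parts of
   w and w'.  For w = uv this gives Omega(uv) <> 0 iff Omega(u) <> 0 and
   Omega(v) <> 0.  The same factorization shows that Omega kills every element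
   whose splitting into (P-part) (x) (non-P-part) vanishes.  Iterated brackets
   involving letters of both u and v split to zero: [x, y] does when x and y are
   pure of opposite classes, and so does any product with a factor that splits
   to zero.  Hence L(V) meets the degree of uv only in 0. *)

Lemma big_perm_lift0 (R : nmodType) m (G : 'S_m.+1 -> R) :
  \sum_(s : 'S_m.+1) G s = \sum_(k : 'I_m.+1) \sum_(s : 'S_m) G (lift_perm ord0 k s).
Proof.
pose f (ks : 'I_m.+1 * 'S_m) := lift_perm ord0 ks.1 ks.2.
have f_inj : injective f.
  move=> [k s] [k' s'] /= /permP ef.
  have ek : k = k' by have := ef ord0; rewrite !lift_perm_id.
  subst k'; congr (_, _); apply/permP => x.
  by apply: (@lift_inj _ k); rewrite -!(lift_perm_lift ord0) ef.
have f_bij : bijective f.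
  by apply: (inj_card_bij f_inj); rewrite card_prod card_ord !card_Sn factS.
by rewrite (reindex f) /=; [rewrite pair_big | apply: onW_bij].
Qed.

Lemma big_ord_recl_cond (R : Type) (idx : R) (op : Monoid.law idx) m
    (P : pred 'I_m.+1) (G : 'I_m.+1 -> R) :
  \big[op/idx]_(i | P i) G i =
  op (if P ord0 then G ord0 else idx) (\big[op/idx]_(i < m | P (lift ord0 i)) G (lift ord0 i)).
Proof. by rewrite big_mkcond big_ord_recl -big_mkcond. Qed.

Lemma ltn_lift m (h : 'I_m.+1) (i j : 'I_m) : (lift h i < lift h j)%N = (i < j)%N.
Proof. by rewrite /= !ltnNge leq_bump2. Qed.

Lemma ltn_lift_pivot m (h : 'I_m.+1) (i : 'I_m) : (lift h i < h)%N = (i < h)%N.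
Proof. by rewrite /= /bump; case: leqP => /= ?; lia. Qed.

Section SymmetrizerCoefficients.
Variables (F : fieldType) (n : nat) (q : 'I_n -> 'I_n -> F).

Lemma size_perm_word (w : word n) (s : 'S_(size w)) : size (perm_word s) = size w.
Proof. by rewrite size_map size_enum_ord. Qed.

Lemma nth_perm_word (w : word n) (s : 'S_(size w)) x0 (j : 'I_(size w)) :
  nth x0 (perm_word s) j = nth x0 w ((s^-1)%g j).
Proof. by rewrite (nth_map j) ?size_enum_ord // nth_ord_enum (tnth_nth x0). Qed.

Definition insert_at k (a : 'I_n) (l : word n) : word n := take k l ++ a :: drop k l.

Lemma size_insert_at k a (l : word n) :
  (k <= size l)%N -> size (insert_at k a l) = (size l).+1.
Proof. by move=> kl; rewrite size_cat /= size_takel // size_drop; lia. Qed.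

Lemma perm_word_lift (a : 'I_n) (w : word n) (k : 'I_(size w).+1) (s : 'S_(size w)) :
  @perm_word n (a :: w) (lift_perm ord0 k s) = insert_at k a (perm_word s).
Proof.
have k_le : (k <= size (perm_word s))%N by rewrite size_perm_word -ltnS.
apply: (@eq_from_nth _ a) => [|j]; first by rewrite size_insert_at // !size_perm_word.
rewrite size_perm_word => lj.
have -> : j = Ordinal (lj : (j < size (a :: w))%N) by [].
rewrite nth_perm_word lift_permV /insert_at nth_cat size_takel //.
case: (unliftP k (Ordinal lj)) => [j0|] ej; rewrite ej ?lift_perm_id ?ltnn ?subnn //.
rewrite lift_perm_lift /= -[X in nth _ w X]/(nat_of_ord ((s^-1)%g j0)) -nth_perm_word.
case: (ltnP j0 k) => [lt_j0k|le_kj0].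
  have -> : bump k j0 = j0 by rewrite /bump leqNgt lt_j0k.
  by rewrite lt_j0k nth_take.
have -> : bump k j0 = j0.+1 by rewrite /bump le_kj0.
by rewrite ltnNge (leqW le_kj0) /= subSn //= nth_drop subnKC.
Qed.

Lemma prod_take (R : comPzSemiRingType) (g : 'I_n -> R) (l : word n) k x0 :
  \prod_(x <- take k l) g x = \prod_(j < size l | (j < k)%N) g (nth x0 l j).
Proof.
elim: l k => [|c l IHl] [|k]; rewrite ?big_nil ?big_ord0 //.
  by rewrite big1.
by rewrite -[take _ _]/(c :: take k l) big_cons big_ord_recl_cond /= IHl.
Qed.

Lemma perm_coef_lift (a : 'I_n) (w : word n) (k : 'I_(size w).+1) (s : 'S_(size w)) :
  @perm_coef F n q (a :: w) (lift_perm ord0 k s) =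
  \prod_(x <- take k (perm_word s)) q a x * perm_coef q s.
Proof.
rewrite /perm_coef big_ord_recl; congr (_ * _).
  rewrite big_ord_recl_cond ltnn /= mul1r lift_perm_id (prod_take _ _ _ a) size_perm_word.
  rewrite (reindex_inj (@perm_inj _ (s^-1)%g)).
  apply: eq_big => [j|j _]; first by rewrite lift_perm_lift ltn_lift_pivot permKV.
  by rewrite nth_perm_word !(tnth_nth a).
apply: eq_bigr => x _; rewrite big_ord_recl_cond ltn0 /= mul1r.
apply: eq_big => [b|b _]; first by rewrite !lift_perm_lift !ltn_lift.
by rewrite !(tnth_nth a).
Qed.

Fixpoint deletions (a : 'I_n) (w : word n) : seq (F * word n) :=
  if w is c :: w0 then
    (if c == a then [:: (1, w0)] else [::]) ++
    [seq (q a c * p.1, c :: p.2) | p <- deletions a w0]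
  else [::].

Lemma sum_insert_at a (l w' : word n) :
  \sum_(k < (size l).+1) (insert_at k a l == w')%:R * \prod_(x <- take k l) q a x
  = \sum_(p <- deletions a w') (p.2 == l)%:R * p.1.
Proof.
elim: w' l => [|d w' IHw] l.
  rewrite big_nil big1 // => k _.
  by rewrite /insert_at; case: (take _ _) => [|? ?] /=; rewrite mul0r.
rewrite /= big_cat big_map big_ord_recl /insert_at take0 drop0 big_nil mulr1 /=.
rewrite eqseq_cons (eq_sym a) (eq_sym l); congr (_ + _).
  by case: (d == a); rewrite ?big_seq1 ?big_nil ?mulr1 ?andbF.
case: l => [|c l]; first by rewrite big_ord0 big1 // => p _; rewrite mul0r.
transitivity ((c == d)%:R * q a c *
  \sum_(k < (size l).+1) (insert_at k a l == w')%:R * \prod_(x <- take k l) q a x).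
  rewrite big_distrr; apply: eq_bigr => k _ /=.
  rewrite /bump /= big_cons eqseq_cons.
  by case: (c == d); rewrite ?mul1r ?mul0r // mulrCA.
rewrite IHw big_distrr; apply: eq_bigr => p _ /=.
rewrite eqseq_cons (eq_sym d).
by case: (c == d) / eqP => [->|]; rewrite ?mul1r ?mul0r // mulrCA mulrA.
Qed.

(* By [tcoef_symm_word], Omega(a w) is Omega(w) with a inserted at every
   position, weighted by q a x for each letter x left in front of it;
   [symm_coef] reads this recursion backwards through [deletions]. *)
Fixpoint symm_coef (w w' : word n) : F :=
  if w is a :: w0 then \sum_(p <- deletions a w') p.1 * symm_coef w0 p.2
  else (w' == [::])%:R.

Lemma tcoef_symm_word_perm (w w' : word n) :
  tcoef (symm_word q w) w' = \sum_(s : 'S_(size w)) (perm_word s == w')%:R * perm_coef q s.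
Proof.
rewrite /tcoef /symm_word big_map big_enum_cond /= big_mkcond /=.
by apply: eq_bigr => s _; rewrite in_setT; case: eqP; rewrite ?mul1r ?mul0r.
Qed.

Lemma tcoef_symm_word (w w' : word n) : tcoef (symm_word q w) w' = symm_coef w w'.
Proof.
elim: w w' => [|a w IHw] w'; rewrite tcoef_symm_word_perm.
  rewrite /= (eq_bigr (fun _ => (w' == [::])%:R)) => [|s _].
    by rewrite sumr_const card_Sn.
  by rewrite /perm_coef big_ord0 mulr1 (size0nil (@size_perm_word [::] s)) eq_sym.
have insert_sum (s : 'S_(size w)) :
    \sum_(k < (size w).+1) (insert_at k a (perm_word s) == w')%:R *
                           \prod_(x <- take k (perm_word s)) q a x
    = \sum_(p <- deletions a w') (p.2 == perm_word s)%:R * p.1.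
  by rewrite -sum_insert_at size_perm_word.
rewrite big_perm_lift0 exchange_big /=.
under eq_bigr => s _ do under eq_bigr => k _ do rewrite perm_word_lift perm_coef_lift mulrA.
under eq_bigr => s _ do rewrite -big_distrl /= insert_sum big_distrl /=.
rewrite exchange_big; apply: eq_bigr => p _ /=.
rewrite -IHw tcoef_symm_word_perm big_distrr; apply: eq_bigr => s _ /=.
by rewrite eq_sym mulrAC mulrC.
Qed.

Lemma mem_deletions a (w : word n) p : p \in deletions a w ->
  exists s1 s2, w = s1 ++ a :: s2 /\ p.2 = s1 ++ s2.
Proof.
elim: w p => [|c w IHw] p //=; rewrite mem_cat => /orP[|/mapP[p' /IHw[s1 [s2 [-> ->]]] ->]].
  by case: eqP => [->|//]; rewrite inE => /eqP ->; exists [::], w.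
by exists (c :: s1), s2.
Qed.

Lemma symm_coef_eq0 (w w' : word n) : ~~ perm_eq w w' -> symm_coef w w' = 0.
Proof.
elim: w w' => [|a w IHw] w' /=; first by case: w'.
move=> not_perm; apply: big1_seq => p /andP[_ /mem_deletions[s1 [s2 [ew' ->]]]].
rewrite IHw ?mulr0 //; apply: contra not_perm => perm_w.
by rewrite ew' perm_sym -cat1s perm_catCA perm_cons perm_sym.
Qed.

Lemma perm_eq_symm_coef (w w' : word n) : symm_coef w w' != 0 -> perm_eq w w'.
Proof. by apply: contraNT => /symm_coef_eq0 ->. Qed.

Lemma tcoef_symm (t : tens F n) w' :
  tcoef (symm q t) w' = \sum_(p <- t) p.1 * symm_coef p.2 w'.
Proof.
rewrite /tcoef /symm big_flatten big_map /=; apply: eq_bigr => p _.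
by rewrite /tscale big_map /= -big_distrr -tcoef_symm_word.
Qed.

Lemma nichols_zero_word w : nichols_zero q (tword F w) <-> forall w', symm_coef w w' = 0.
Proof.
by split=> z w'; have := z w'; rewrite tcoef_symm big_seq1 mul1r.
Qed.

Lemma nichols_nonzero_word w : ~ nichols_zero q (tword F w) -> exists w', symm_coef w w' != 0.
Proof.
move=> nz; suff /hasP[w' _ nz_w'] : has (fun w' => symm_coef w w' != 0) (permutations w).
  by exists w'.
apply/hasPn => all0; apply/nz/nichols_zero_word => w'.
have [perm_w|] := boolP (perm_eq w w'); last exact: symm_coef_eq0.
by apply/eqP; rewrite -[_ == 0]negbK all0 // mem_permutations perm_sym.
Qed.

Definition homogeneous (t : tens F n) (s : word n) : Prop :=
  forall p, p \in t -> perm_eq p.2 s.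

Lemma tcoef_symm_homogeneous t s w' :
  homogeneous t s -> ~~ perm_eq s w' -> tcoef (symm q t) w' = 0.
Proof.
move=> hom not_perm; rewrite tcoef_symm big1_seq // => p /andP[_ pt].
by rewrite symm_coef_eq0 ?mulr0 // (permPl (hom p pt)).
Qed.

Lemma homogeneous_beval (tr : btree n) : homogeneous (beval q tr) (bletters tr).
Proof.
elim: tr => [i|x IHx y IHy] p /=; first by rewrite inE => /eqP ->.
rewrite mem_cat => /orP[/allpairsP[[b a] [/= bin ain ->]] |
                        /mapP[p' /allpairsP[[a b] [/= ain bin ->]] ->]] /=.
  by rewrite perm_catC perm_cat ?IHx ?IHy.
by rewrite perm_cat ?IHx ?IHy.
Qed.

End SymmetrizerCoefficients.

Lemma filter_allC (T : eqType) (a : pred T) (s : seq T) :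
  all (predC a) s -> filter a s = [::].
Proof. by rewrite all_predC has_filter negbK => /eqP. Qed.

Lemma filterC_all (T : eqType) (a : pred T) (s : seq T) :
  all a s -> filter (predC a) s = [::].
Proof.
by move=> all_a; apply: filter_allC; rewrite (eq_all (a2 := a)) // => x /=; rewrite negbK.
Qed.

Lemma mul_chi_swap_eq1 (F : fieldType) n (q : 'I_n -> 'I_n -> F) (s1 s2 : word n) :
  (forall a b, a \in s1 -> b \in s2 -> q a b * q b a = 1) -> chi q s1 s2 * chi q s2 s1 = 1.
Proof.
move=> sym; rewrite /chi [X in _ * X]exchange_big -big_split big1_seq //= => a a1.
by rewrite -big_split big1_seq //= => b b2; apply: sym.
Qed.

Lemma chi_neq0 (F : fieldType) n (q : 'I_n -> 'I_n -> F) (s1 s2 : word n) :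
  (forall i j, q i j != 0) -> chi q s1 s2 != 0.
Proof.
move=> q_neq0; rewrite prodf_seq_neq0; apply/allP => x _ /=.
by rewrite prodf_seq_neq0; apply/allP => y _ /=.
Qed.

Section ShuffleFactorization.
Variables (F : fieldType) (n : nat) (q : 'I_n -> 'I_n -> F) (P : pred 'I_n).
Hypothesis q_neq0 : forall i j, q i j != 0.

Local Notation fU := (filter P).
Local Notation fV := (filter (predC P)).

Definition cross_symmetric (s : word n) : Prop :=
  forall x y, x \in s -> y \in s -> P x -> ~~ P y -> q x y * q y x = 1.

(* Braiding weight of the shuffle interleaving [fU w] and [fV w] into [w]:
   each letter outside [P] is crossed by the later letters in [P]. *)
Fixpoint shuffle_coef (w : word n) : F :=
  if w is c :: w0 then
    if P c then shuffle_coef w0 else shuffle_coef w0 * \prod_(y <- fU w0) q y c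
  else 1.

Lemma shuffle_coef_neq0 w : shuffle_coef w != 0.
Proof.
elim: w => [|c w IHw] /=; first exact: oner_neq0.
by case: (P c); rewrite // mulf_neq0 // prodf_seq_neq0; apply/allP => y _ /=.
Qed.

Lemma sum_deletions_in a (w' : word n) (G : word n -> word n -> F) : P a ->
  \sum_(p <- deletions q a w') p.1 * shuffle_coef p.2 * G (fU p.2) (fV p.2) =
  shuffle_coef w' * \sum_(p <- deletions q a (fU w')) p.1 * G p.2 (fV w').
Proof.
move=> Pa; elim: w' G => [|c w IHw] G /=; first by rewrite !big_nil mulr0.
rewrite big_cat big_map /=; case Pc: (P c) => /=.
  rewrite big_cat big_map /= mulrDr; congr (_ + _).
    by case: eqP => _ /=; rewrite ?big_seq1 ?big_nil ?mulr0 ?mul1r.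
  transitivity (q a c * \sum_(p <- deletions q a w)
                  p.1 * shuffle_coef p.2 * G (c :: fU p.2) (fV p.2)).
    by rewrite big_distrr; apply: eq_bigr => p _; rewrite /= !mulrA.
  rewrite (IHw (fun x => G (c :: x))) mulrCA big_distrr /=.
  by congr (_ * _); apply: eq_bigr => p _; rewrite mulrA.
have /negbTE -> : c != a by apply: contraFneq _ Pc => ->.
rewrite big_nil add0r.
transitivity (q a c * \sum_(p <- deletions q a w) p.1 * shuffle_coef p.2 *
  (fun x y => \prod_(z <- x) q z c * G x (c :: y)) (fU p.2) (fV p.2)).
  by rewrite big_distrr; apply: eq_bigr => p _ /=; ring.
rewrite (IHw (fun x y => \prod_(z <- x) q z c * G x (c :: y))) mulrCA -mulrA !big_distrr.
apply: eq_big_seq => p /mem_deletions[s1 [s2 [-> ->]]] /=.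
by rewrite !big_cat big_cons /=; ring.
Qed.

Lemma sum_deletions_out a (w' : word n) (G : word n -> word n -> F) : ~~ P a ->
  (forall y, y \in fU w' -> q y a * q a y = 1) ->
  \prod_(y <- fU w') q y a *
    \sum_(p <- deletions q a w') p.1 * shuffle_coef p.2 * G (fU p.2) (fV p.2) =
  shuffle_coef w' * \sum_(p <- deletions q a (fV w')) p.1 * G (fU w') p.2.
Proof.
move=> Pa; elim: w' G => [|c w IHw] G hyp; first by rewrite !big_nil !mulr0.
have {}IHw G' : \prod_(y <- fU w) q y a *
    \sum_(p <- deletions q a w) p.1 * shuffle_coef p.2 * G' (fU p.2) (fV p.2) =
  shuffle_coef w * \sum_(p <- deletions q a (fV w)) p.1 * G' (fU w) p.2.
  apply: IHw => y; rewrite mem_filter => /andP[Py yw]; apply: hyp.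
  by rewrite mem_filter Py inE yw orbT.
rewrite /= big_cat big_map /=; case Pc: (P c) => /=.
  have /negbTE -> : c != a by apply: contraTneq Pc => ->.
  rewrite big_nil add0r big_cons -mulrA.
  transitivity (q c a * q a c * (\prod_(y <- fU w) q y a * \sum_(p <- deletions q a w)
                  p.1 * shuffle_coef p.2 * G (c :: fU p.2) (fV p.2))).
    by rewrite !big_distrr; apply: eq_bigr => p _ /=; ring.
  by rewrite hyp ?mul1r ?(IHw (fun x => G (c :: x))) // mem_filter Pc mem_head.
rewrite big_cat big_map /= mulrDr [RHS]mulrDr; congr (_ + _).
  by case: eqP => [->|_] /=; rewrite ?big_seq1 ?big_nil ?mulr0 //=; ring.
transitivity (q a c * \prod_(y <- fU w) q y c * (\prod_(y <- fU w) q y a *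
  \sum_(p <- deletions q a w) p.1 * shuffle_coef p.2 * G (fU p.2) (c :: fV p.2))).
  rewrite !big_distrr; apply: eq_big_seq => p /mem_deletions[s1 [s2 [-> ->]]] /=.
  by rewrite !filter_cat /= (negbTE Pa); ring.
by rewrite (IHw (fun x y => G x (c :: y))) !big_distrr; apply: eq_bigr => p _ /=; ring.
Qed.

Lemma symm_coef_split (w : word n) : cross_symmetric w ->
  forall w', symm_coef q w w' * shuffle_coef w =
    shuffle_coef w' * symm_coef q (fU w) (fU w') * symm_coef q (fV w) (fV w').
Proof.
elim: w => [|a w IHw] sym w'.
  rewrite /= mulr1; case: w' => [|c w'] /=; first by rewrite !mulr1.
  by case: (P c); rewrite /= ?mulr0 ?mul0r.
have sub_w : {subset w <= a :: w} by move=> x xw; rewrite inE xw orbT.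
have {}IHw := IHw (fun x y xw yw => sym x y (sub_w x xw) (sub_w y yw)).
pose G x y := symm_coef q (fU w) x * symm_coef q (fV w) y.
have IHp p : p.1 * symm_coef q w p.2 * shuffle_coef w =
             p.1 * shuffle_coef p.2 * G (fU p.2) (fV p.2).
  by rewrite -mulrA IHw /G; ring.
rewrite /= big_distrl /=; case Pa: (P a) => /=.
  under eq_bigr => p _ do rewrite IHp.
  rewrite sum_deletions_in // -[RHS]mulrA big_distrl /=; congr (_ * _).
  by apply: eq_bigr => p _; rewrite /G; ring.
have [fU0|fU_neq0] := eqVneq (symm_coef q (fU w) (fU w')) 0.
  rewrite fU0 mulr0 mul0r big1_seq // => p /andP[_ /mem_deletions[s1 [s2 [ew' ep]]]].
  have fUp : fU p.2 = fU w' by rewrite ew' ep !filter_cat /= Pa.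
  by rewrite mulrA IHp /G fUp fU0 mul0r mulr0 mul0r.
have perm_fU := perm_eq_symm_coef fU_neq0.
have sym_a y : y \in fU w' -> q y a * q a y = 1.
  rewrite -(perm_mem perm_fU) mem_filter => /andP[Py yw].
  by apply: sym; rewrite ?inE ?yw ?eqxx ?orbT ?Pa.
under eq_bigr => p _ do rewrite mulrA IHp.
rewrite -big_distrl /= (perm_big _ perm_fU) /= mulrC sum_deletions_out ?Pa //.
rewrite -[RHS]mulrA; congr (_ * _).
by rewrite big_distrr; apply: eq_bigr => p _; rewrite /G /=; ring.
Qed.

Definition cross_coef (w1 w2 : word n) : F :=
  \prod_(x <- fV w1) \prod_(y <- fU w2) q y x.

Lemma shuffle_coef_cat w1 w2 :
  shuffle_coef (w1 ++ w2) = shuffle_coef w1 * shuffle_coef w2 * cross_coef w1 w2.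
Proof.
rewrite /cross_coef; elim: w1 => [|c w1 IHw] /=; first by rewrite big_nil mul1r mulr1.
case: (P c) => /=; first by rewrite IHw.
by rewrite IHw big_cons filter_cat big_cat /=; ring.
Qed.

Lemma perm_cross_coef w1 w2 s1 s2 :
  perm_eq w1 s1 -> perm_eq w2 s2 -> cross_coef w1 w2 = cross_coef s1 s2.
Proof.
move=> p1 p2; rewrite /cross_coef (perm_big _ (perm_filter _ p1)).
by apply: eq_bigr => x _; rewrite (perm_big _ (perm_filter _ p2)).
Qed.

Lemma shuffle_coef_all w : all P w -> shuffle_coef w = 1.
Proof. by elim: w => [|c w IHw] //= /andP[-> /IHw]. Qed.

Lemma shuffle_coef_allC w : all (predC P) w -> shuffle_coef w = 1.
Proof.
elim: w => [|c w IHw] //= /andP[/negbTE -> allCw].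
by rewrite IHw // (filter_allC allCw) big_nil mulr1.
Qed.

(* [split_null t]: the image of [t] under
   x_w |-> (x_(fU w) (x) x_(fV w)) / shuffle_coef w vanishes in T(V) (x) T(V);
   [h] ranges over the linear forms on T(V) (x) T(V). *)
Definition split_sum (h : word n -> word n -> F) (t : tens F n) : F :=
  \sum_(p <- t) p.1 / shuffle_coef p.2 * h (fU p.2) (fV p.2).

Definition split_null (t : tens F n) : Prop := forall h, split_sum h t = 0.

Lemma split_sum_add h t1 t2 : split_sum h (tadd t1 t2) = split_sum h t1 + split_sum h t2.
Proof. exact: big_cat. Qed.

Lemma split_sum_scale h c t : split_sum h (tscale c t) = c * split_sum h t.
Proof. by rewrite /split_sum big_map big_distrr; apply: eq_bigr => p _ /=; ring. Qed.

Lemma split_sum_mul h t1 t2 s1 s2 : homogeneous t1 s1 -> homogeneous t2 s2 ->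
  split_sum h (tmul t1 t2) = (cross_coef s1 s2)^-1 *
    \sum_(a <- t1) \sum_(b <- t2) a.1 / shuffle_coef a.2 * (b.1 / shuffle_coef b.2) *
      h (fU a.2 ++ fU b.2) (fV a.2 ++ fV b.2).
Proof.
move=> hom1 hom2; rewrite /split_sum big_allpairs_dep big_distrr /=.
apply: eq_big_seq => a ta; rewrite big_distrr; apply: eq_big_seq => b tb /=.
rewrite shuffle_coef_cat (perm_cross_coef (hom1 a ta) (hom2 b tb)) !filter_cat !invfM.
ring.
Qed.

Lemma split_null_mull t1 t2 s1 s2 : homogeneous t1 s1 -> homogeneous t2 s2 ->
  split_null t1 -> split_null (tmul t1 t2).
Proof.
move=> hom1 hom2 null1 h; rewrite (split_sum_mul _ hom1 hom2) exchange_big big1 ?mulr0 // => b _.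
rewrite -[RHS](null1 (fun x y => b.1 / shuffle_coef b.2 * h (x ++ fU b.2) (y ++ fV b.2))).
by apply: eq_bigr => a _; ring.
Qed.

Lemma split_null_mulr t1 t2 s1 s2 : homogeneous t1 s1 -> homogeneous t2 s2 ->
  split_null t2 -> split_null (tmul t1 t2).
Proof.
move=> hom1 hom2 null2 h; rewrite (split_sum_mul _ hom1 hom2) big1 ?mulr0 // => a _.
rewrite -[RHS](null2 (fun x y => a.1 / shuffle_coef a.2 * h (fU a.2 ++ x) (fV a.2 ++ y))).
by apply: eq_bigr => b _; ring.
Qed.

Lemma split_sum_mul_pure h t1 t2 s1 s2 : homogeneous t1 s1 -> homogeneous t2 s2 ->
  all P s1 -> all (predC P) s2 ->
  split_sum h (tmul t2 t1) = (chi q s1 s2)^-1 * split_sum h (tmul t1 t2).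
Proof.
move=> hom1 hom2 P1 C2.
rewrite (split_sum_mul h hom2 hom1) (split_sum_mul h hom1 hom2) mulrA -invfM.
congr (_^-1 * _).
  rewrite /cross_coef (filterC_all P1) big_nil mulr1.
  by rewrite (all_filterP C2) (all_filterP P1) exchange_big.
rewrite exchange_big; apply: eq_big_seq => a ta; apply: eq_big_seq => b tb.
have Pa : all P a.2 by rewrite (perm_all _ (hom1 a ta)).
have Cb : all (predC P) b.2 by rewrite (perm_all _ (hom2 b tb)).
rewrite (shuffle_coef_all Pa) (shuffle_coef_allC Cb) (all_filterP Pa) (filterC_all Pa).
by rewrite (all_filterP Cb) (filter_allC Cb) !cats0 /= (mulrC (b.1 / 1)).
Qed.

Lemma split_null_bracket_all_allC (x y : btree n) :
  all P (bletters x) -> all (predC P) (bletters y) ->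
  chi q (bletters x) (bletters y) * chi q (bletters y) (bletters x) = 1 ->
  split_null (beval q (BNode x y)).
Proof.
move=> Px Cy chi_inv h; rewrite /= split_sum_add split_sum_scale.
rewrite (split_sum_mul_pure _ (@homogeneous_beval _ _ q x) (@homogeneous_beval _ _ q y)) //.
by rewrite (mulr1_eq chi_inv) mulNr addrN.
Qed.

Lemma split_null_bracket_allC_all (x y : btree n) :
  all (predC P) (bletters x) -> all P (bletters y) -> split_null (beval q (BNode x y)).
Proof.
move=> Cx Py h; rewrite /= split_sum_add split_sum_scale.
have [hx hy] := (@homogeneous_beval _ _ q x, @homogeneous_beval _ _ q y).
rewrite [X in _ + _ * X](split_sum_mul_pure _ hy hx) //.
by rewrite mulrA mulNr mulfV ?chi_neq0 // mulN1r addrN.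
Qed.

Lemma split_null_beval (tr : btree n) : cross_symmetric (bletters tr) ->
  has P (bletters tr) -> has (predC P) (bletters tr) -> split_null (beval q tr).
Proof.
elim: tr => [i|x IHx y IHy] sym; first by rewrite /= !orbF => ->.
have sub_x : {subset bletters x <= bletters (BNode x y)} by move=> a; rewrite mem_cat => ->.
have sub_y : {subset bletters y <= bletters (BNode x y)}.
  by move=> a; rewrite mem_cat orbC => ->.
have {}IHx := IHx (fun a b ha hb => sym a b (sub_x a ha) (sub_x b hb)).
have {}IHy := IHy (fun a b ha hb => sym a b (sub_y a ha) (sub_y b hb)).
have null_node : split_null (beval q x) \/ split_null (beval q y) ->
                 split_null (beval q (BNode x y)).
  have [hx hy] := (@homogeneous_beval _ _ q x, @homogeneous_beval _ _ q y).
  move=> [] null h; rewrite /= split_sum_add split_sum_scale.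
    by rewrite (split_null_mulr hy hx null) (split_null_mull hx hy null) mulr0 addr0.
  by rewrite (split_null_mull hy hx null) (split_null_mulr hx hy null) mulr0 addr0.
rewrite -[bletters _]/(bletters x ++ bletters y) !has_cat => hasP hasC.
case: (boolP (has P (bletters x) && has (predC P) (bletters x))) => [/andP[hPx hCx] | mx].
  by apply: null_node; left; apply: IHx.
case: (boolP (has P (bletters y) && has (predC P) (bletters y))) => [/andP[hPy hCy] | my].
  by apply: null_node; right; apply: IHy.
case: (boolP (has P (bletters x))) => [hPx | nPx].
  have Px : all P (bletters x) by move: mx; rewrite hPx has_predC negbK.
  have hCy : has (predC P) (bletters y) by move: hasC; rewrite has_predC Px.
  have Cy : all (predC P) (bletters y) by rewrite all_predC; apply: contra my => ->.
  apply: split_null_bracket_all_allC => //; apply: mul_chi_swap_eq1 => a b ha hb.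
  by apply: sym; [exact: sub_x | exact: sub_y | exact: (allP Px) | exact: (allP Cy)].
have hPy : has P (bletters y) by move: hasP; rewrite (negbTE nPx).
apply: split_null_bracket_allC_all; first by rewrite all_predC.
by move: my; rewrite hPy has_predC negbK.
Qed.

Lemma split_null_nichols_zero t s :
  homogeneous t s -> cross_symmetric s -> split_null t -> nichols_zero q t.
Proof.
move=> hom sym null w'; rewrite tcoef_symm -[RHS](null (fun x y =>
  shuffle_coef w' * symm_coef q x (fU w') * symm_coef q y (fV w'))).
apply: eq_big_seq => p pt; rewrite -symm_coef_split.
  by rewrite mulrCA divfK ?shuffle_coef_neq0 // mulrC.
by move=> x y; rewrite !(perm_mem (hom p pt)); apply: sym.
Qed.

End ShuffleFactorization.

Lemma nichols_zero_in_L (F : fieldType) n (q : 'I_n -> 'I_n -> F) (t : tens F n) :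
  nichols_zero q t -> in_L q t.
Proof. by exists [::]; rewrite /tadd cats0. Qed.

Section DisjointSymmetricWords.
Variables (F : fieldType) (n : nat) (q : 'I_n -> 'I_n -> F) (u v : word n).
Hypothesis q_neq0 : forall i j, q i j != 0.
Hypothesis disj : forall i, i \in u -> i \notin v.
Hypothesis sym_uv : forall i j, i \in u -> j \in v -> q i j * q j i = 1.

Let inU : pred 'I_n := [pred i | i \in u].

Let all_inU_u : all inU u. Proof. exact/allP. Qed.

Let all_notinU_v : all (predC inU) v.
Proof. by apply/allP => j jv /=; apply: contraL jv; apply: disj. Qed.

Let sym_cat : cross_symmetric q inU (u ++ v).
Proof.
by move=> x y; rewrite /inU /= => _; rewrite mem_cat => /orP[-> //|yv] xu _; apply: sym_uv.
Qed.

Lemma symm_coef_cat w' : symm_coef q (u ++ v) w' =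
  shuffle_coef q inU w' * symm_coef q u (filter inU w') * symm_coef q v (filter (predC inU) w').
Proof.
have := symm_coef_split sym_cat w'.
rewrite shuffle_coef_cat (shuffle_coef_all _ all_inU_u) (shuffle_coef_allC _ all_notinU_v).
rewrite /cross_coef (filterC_all all_inU_u) big_nil !mulr1 => ->.
rewrite !filter_cat (all_filterP all_inU_u) (filter_allC all_notinU_v) cats0.
by rewrite (filterC_all all_inU_u) (all_filterP all_notinU_v).
Qed.

Lemma nichols_zero_catl :
  nichols_zero q (tword F u) -> nichols_zero q (tword F (u ++ v)).
Proof.
by move/nichols_zero_word=> z; apply/nichols_zero_word => w'; rewrite symm_coef_cat z mulr0 mul0r.
Qed.

Lemma nichols_zero_catr :
  nichols_zero q (tword F v) -> nichols_zero q (tword F (u ++ v)).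
Proof.
by move/nichols_zero_word=> z; apply/nichols_zero_word => w'; rewrite symm_coef_cat z mulr0.
Qed.

Lemma nichols_nonzero_cat : ~ nichols_zero q (tword F u) -> ~ nichols_zero q (tword F v) ->
  ~ nichols_zero q (tword F (u ++ v)).
Proof.
move=> /nichols_nonzero_word[a ua] /nichols_nonzero_word[b vb] /nichols_zero_word/(_ (a ++ b)).
have Pa : all inU a by rewrite -(perm_all _ (perm_eq_symm_coef ua)).
have Cb : all (predC inU) b by rewrite -(perm_all _ (perm_eq_symm_coef vb)).
rewrite symm_coef_cat !filter_cat (all_filterP Pa) (filter_allC Cb) cats0.
rewrite (filterC_all Pa) (all_filterP Cb) /= => /eqP.
by rewrite !mulf_eq0 (negbTE (shuffle_coef_neq0 _ q_neq0 _)) (negbTE ua) (negbTE vb).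
Qed.

Hypotheses (u_ne : u != [::]) (v_ne : v != [::]).

Lemma tcoef_symm_beval_eq0 (tr : btree n) w' :
  perm_eq (u ++ v) w' -> tcoef (symm q (beval q tr)) w' = 0.
Proof.
move=> perm_uv; have [perm_tr|] := boolP (perm_eq (bletters tr) w'); last first.
  exact: tcoef_symm_homogeneous (@homogeneous_beval _ _ q tr).
have mem_tr : bletters tr =i u ++ v.
  by apply: perm_mem; rewrite (perm_trans perm_tr) // perm_sym.
have sym_tr : cross_symmetric q inU (bletters tr).
  by move=> x y; rewrite !mem_tr; apply: sym_cat.
apply: (split_null_nichols_zero q_neq0 (@homogeneous_beval _ _ q tr) sym_tr).
have /hasP[x xu _] : has predT u by rewrite has_predT lt0n size_eq0.
have /hasP[y yv _] : has predT v by rewrite has_predT lt0n size_eq0.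
apply: split_null_beval => //; apply/hasP; [exists x | exists y];
  rewrite ?mem_tr ?mem_cat ?xu ?yv ?orbT //=.
by apply: contraL yv; apply: disj.
Qed.

Lemma in_L_nichols_zero :
  in_L q (tword F (u ++ v)) -> nichols_zero q (tword F (u ++ v)).
Proof.
case=> cs zero; apply/nichols_zero_word => w'.
have [perm_uv|] := boolP (perm_eq (u ++ v) w'); last exact: symm_coef_eq0.
have := zero w'; rewrite tcoef_symm big_cat big_seq1 mul1r big_flatten big_map /= => <-.
rewrite big1 ?addr0 // => c _; rewrite /tscale big_map /=.
under eq_bigr => p _ do rewrite -mulrA.
by rewrite -big_distrr /= -tcoef_symm tcoef_symm_beval_eq0 ?mulr0.
Qed.

End DisjointSymmetricWords.

Theorem corollary5p2 (F : closedFieldType) (n : nat) (q : 'I_n -> 'I_n -> F)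
  (charF0 : [pchar F] =i pred0)
  (qnz : forall i j, q i j != 0)
  (u v : seq 'I_n) (u_ne : u != [::]) (v_ne : v != [::])
  (disj : forall i, i \in u -> i \notin v)
  (hq : forall i j, i \in u -> j \in v -> q i j * q j i = 1) :
  ((~ nichols_zero q (tword F u) /\ ~ nichols_zero q (tword F v)) <->
     ~ nichols_zero q (tword F (u ++ v)))
  /\ (~ nichols_zero q (tword F (u ++ v)) <-> ~ in_L q (tword F (u ++ v))).
Proof.
split; split.
- by case; apply: nichols_nonzero_cat.
- move=> nz_uv; split=> z; apply: nz_uv.
    exact: nichols_zero_catl.
  exact: nichols_zero_catr.
- by move=> nz_uv /(in_L_nichols_zero qnz disj hq u_ne v_ne).
- by move=> notL z; apply/notL/nichols_zero_in_L.
Qed.
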